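(* Let $z\ge1$, $X\subset[\Delta]^d$ finite, and let $C\subseteq X$ be a constant-factor approximation to the optimal $(k,z)$-medoids clustering on $X$. For a point $x\in X$, let $u$ be a center of $C$ closest to $x$ (ties broken arbitrarily). Then for any center $c\in C\setminus\{u\}$, \[\min_{p\in C\cup\{x\}\setminus\{c\}}\|c-p\|_2^z\le\min_{p\in C\setminus\{c\}}\|c-p\|_2^z\le2^{z+1}\min_{p\in C\cup\{x\}\setminus\{c\}}\|c-p\|_2^z.\]
   Context: The $(k,z)$-medoids clustering problem on $X$ asks for a set $C\subseteq X$ with $|C|\le k$ minimizing $\sum_{y\in X}\min_{c\in C}\|y-c\|_2^z$. *)

From HB Require Import structures.
From mathcomp Require Import all_boot all_order all_algebra.
From mathcomp Require Import all_classical all_reals all_analysis.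
Set Implicit Arguments. Unset Strict Implicit. Unset Printing Implicit Defensive.
Import Order.TTheory GRing.Theory Num.Theory.
Local Open Scope ring_scope.

(* A point of the grid [Delta]^d = {1,...,Delta}^d: coordinate i is
   (p i : nat) + 1 where p i : 'I_Delta. *)
Definition grid (d Delta : nat) : finType := {ffun 'I_d -> 'I_Delta}.

Definition coord {R : realType} {d Delta : nat} (p : grid d Delta) (i : 'I_d) : R :=
  ((p i : nat).+1)%:R.

Definition dist2 {R : realType} {d Delta : nat} (p q : grid d Delta) : R :=
  Num.sqrt (\sum_(i < d) (coord p i - coord q i) ^+ 2).

Definition distz {R : realType} {d Delta : nat} (z : R) (p q : grid d Delta) : R :=
  (dist2 p q) `^ z.

(* min_{p in S} ||c - p||_2^z  (as an extended real; +oo for empty S) *)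
Definition mindistz {R : realType} {d Delta : nat} (z : R)
  (S : {set grid d Delta}) (c : grid d Delta) : \bar R :=
  \big[Order.min/+oo%E]_(p in S) (distz z c p)%:E.

Definition medoid_cost {R : realType} {d Delta : nat} (z : R)
  (X C : {set grid d Delta}) : \bar R :=
  (\sum_(y in X) mindistz z C y)%E.

Definition approx_medoids {R : realType} {d Delta : nat} (z alpha : R) (k : nat)
  (X C : {set grid d Delta}) : Prop :=
  C \subset X /\ (#|C| <= k)%N /\
  forall C' : {set grid d Delta}, C' \subset X -> (#|C'| <= k)%N ->
    (medoid_cost z X C <= alpha%:E * medoid_cost z X C')%E.

From Pilot Require Import Defs.
From HB Require Import structures.
From mathcomp Require Import all_boot all_order all_algebra.
From mathcomp Require Import all_classical all_reals all_analysis.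
From mathcomp Require Import ring lra.

Set Implicit Arguments.
Unset Strict Implicit.
Unset Printing Implicit Defensive.
Import Order.TTheory GRing.Theory Num.Theory.
Local Open Scope ring_scope.

(* C :\ c is contained in (x |: C) :\ c, which gives the first inequality.
   For the second, every point of (x |: C) :\ c other than x already lies in
   C :\ c, while the center u nearest to x lies in C :\ c and satisfies
   ||c - u|| <= ||c - x|| + ||x - u|| <= 2 ||c - x||. *)

Lemma sqr_sum_mul_le (R : realFieldType) n (a b : 'I_n -> R) :
  (\sum_i a i * b i) ^+ 2 <= (\sum_i a i ^+ 2) * (\sum_i b i ^+ 2).
Proof.
(* Lagrange's identity: the difference is (1/2) sum_(i,j) (a_i b_j - a_j b_i)^2. *)
set P := \sum_i \sum_j a i ^+ 2 * b j ^+ 2.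
set Q := \sum_i \sum_j a i * b i * (a j * b j).
have lagrange : \sum_i \sum_j (a i * b j - a j * b i) ^+ 2 = 2 * P - 2 * Q.
  have swapP : \sum_i \sum_j a j ^+ 2 * b i ^+ 2 = P by rewrite exchange_big.
  rewrite mulr_natl mulr2n -{2}swapP /P /Q mulr_sumr.
  rewrite -big_split -sumrB; apply: eq_bigr => i _.
  rewrite mulr_sumr -big_split -sumrB; apply: eq_bigr => j _ /=; ring.
have sum_ge0 : 0 <= \sum_i \sum_j (a i * b j - a j * b i) ^+ 2.
  by do 2![apply: sumr_ge0 => ? _]; apply: sqr_ge0.
have -> : (\sum_i a i ^+ 2) * (\sum_i b i ^+ 2) = P.
  by rewrite mulr_suml; apply: eq_bigr => i _; rewrite mulr_sumr.
have -> : (\sum_i a i * b i) ^+ 2 = Q.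
  by rewrite expr2 mulr_suml; apply: eq_bigr => i _; rewrite mulr_sumr.
lra.
Qed.

Lemma sqrt_sum_sqrD_le (R : rcfType) n (a b : 'I_n -> R) :
  Num.sqrt (\sum_i (a i + b i) ^+ 2) <=
  Num.sqrt (\sum_i a i ^+ 2) + Num.sqrt (\sum_i b i ^+ 2).
Proof.
set A := \sum_i a i ^+ 2; set B := \sum_i b i ^+ 2; set S := \sum_i a i * b i.
have A_ge0 : 0 <= A by apply: sumr_ge0 => i _; apply: sqr_ge0.
have B_ge0 : 0 <= B by apply: sumr_ge0 => i _; apply: sqr_ge0.
have S_le : S <= Num.sqrt A * Num.sqrt B.
  rewrite -sqrtrM // (le_trans (ler_norm S)) // -sqrtr_sqr.
  exact/ler_wsqrtr/sqr_sum_mul_le.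
have -> : \sum_i (a i + b i) ^+ 2 = A + 2 * S + B.
  by rewrite mulr_sumr -!big_split; apply: eq_bigr => i _ /=; ring.
rewrite -(ger0_norm (addr_ge0 (sqrtr_ge0 A) (sqrtr_ge0 B))) -sqrtr_sqr.
by apply: ler_wsqrtr; rewrite sqrrD !sqr_sqrtr //; lra.
Qed.

Section GridDistance.
Variables (R : realType) (d Delta : nat).
Implicit Types (p q r : grid d Delta) (z : R) (S T : {set grid d Delta}).

Lemma dist2_ge0 p q : 0 <= dist2 p q :> R.
Proof. exact: sqrtr_ge0. Qed.

Lemma dist2C p q : dist2 p q = dist2 q p :> R.
Proof.
by rewrite /dist2; congr Num.sqrt; apply: eq_bigr => i _; rewrite -sqrrN opprB.
Qed.

Lemma dist2_triangle p q r : dist2 p r <= dist2 p q + dist2 q r :> R.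
Proof.
pose dq i : R := Defs.coord p i - Defs.coord q i.
pose dr i : R := Defs.coord q i - Defs.coord r i.
rewrite /dist2 (eq_bigr (fun i => (dq i + dr i) ^+ 2)).
  exact: sqrt_sum_sqrD_le.
by move=> i _; rewrite /dq /dr addrA subrK.
Qed.

Lemma dist2_le_nearest p x u :
  dist2 x u <= dist2 x p :> R -> dist2 p u <= 2 * dist2 p x :> R.
Proof.
move=> ux_le; rewrite (le_trans (dist2_triangle p x u)) //.
by rewrite (dist2C x p) in ux_le; lra.
Qed.

Lemma distz_le_nearest z p x u : 0 <= z ->
  dist2 x u <= dist2 x p :> R -> distz z p u <= 2 `^ z * distz z p x.
Proof.
move=> z_ge0 /dist2_le_nearest ux_le; rewrite /distz -powRM ?dist2_ge0 //.
by apply: ge0_ler_powR; rewrite ?nnegrE ?mulr_ge0 ?dist2_ge0.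
Qed.

Lemma mindistz_le z S c p : p \in S -> (mindistz z S c <= (distz z c p)%:E)%E.
Proof. exact: bigmin_le_cond. Qed.

Lemma mindistzS z S T c : S \subset T -> (mindistz z T c <= mindistz z S c)%E.
Proof.
move=> /fintype.subsetP sST; apply: le_bigmin => [|p /sST]; first exact: leey.
exact: mindistz_le.
Qed.

Lemma mindistz_le_scale z (K : R) S T c : 0 < K ->
  (forall p, p \in T -> exists2 q, q \in S & distz z c q <= K * distz z c p) ->
  (mindistz z S c <= K%:E * mindistz z T c)%E.
Proof.
move=> K_gt0 closeS; apply: (big_ind (fun m => mindistz z S c <= K%:E * m)%E).
- by rewrite gt0_muley ?lte_fin // leey.
- by move=> m m' Hm Hm'; rewrite minEle; case: ifP.
move=> p /closeS[q qS le_q].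
by rewrite (le_trans (mindistz_le z c qS)) // -EFinM lee_fin.
Qed.

End GridDistance.

Theorem lemma3p7 (R : realType) (d Delta k : nat) (z alpha : R)
  (X C : {set grid d Delta}) (x u c : grid d Delta) :
  1 <= z -> 1 <= alpha ->
  approx_medoids z alpha k X C ->
  x \in X ->
  u \in C -> (forall v, v \in C -> dist2 x u <= dist2 x v :> R) ->
  c \in C :\ u ->
  (mindistz z ((x |: C) :\ c) c <= mindistz z (C :\ c) c)%E /\
  (mindistz z (C :\ c) c <= (2 `^ (z + 1))%:E * mindistz z ((x |: C) :\ c) c)%E.
Proof.
move=> z_ge1 _ _ _ uC u_nearest; rewrite in_setD1 => /andP[cu cC].
split; first exact/mindistzS/finset.setSD/subsetU1.
have K_ge1 : 1 <= 2 `^ (z + 1) :> R.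
  by rewrite -[leLHS](powRr0 2); apply: ler_powR; lra.
apply: mindistz_le_scale => [|p]; first lra.
rewrite in_setD1 in_setU1 => /andP[pc /orP[/eqP-> | pC]].
- exists u; first by rewrite in_setD1 uC eq_sym cu.
  have z_ge0 : 0 <= z by lra.
  apply: le_trans (distz_le_nearest z_ge0 (u_nearest c cC)) _.
  by rewrite ler_wpM2r ?powR_ge0 // ler_powR ?ler1n // lerDl.
- exists p; first by rewrite in_setD1 pc pC.
  by rewrite ler_peMl ?powR_ge0.
Qed.
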